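(* Let $T$ be a c.n.u. contraction on $H$ and let $(H_+,H_-,\Gamma_+,\Gamma_-)$ be a boundary quadruple for $A_T^{\perp_s}$ with contractive Weyl function $B$. Suppose there is $\mathcal{C}\in\mathbb{B}(H_+,H_-)$ such that the graph of $T$ equals $\{a\in A_T^{\perp_s}:\Gamma_-a=\mathcal{C}\Gamma_+a\}$. Then for every $x\in H$, with $a=(x,Tx)\in A_T^{\perp_s}$, $$\lambda f_{\hat x}(\lambda)-f_{\widehat{Tx}}(\lambda)=(B(\lambda)-\mathcal{C})\Gamma_+a\quad(\lambda\in\mathbb{D}_+),$$ $$f_{\hat x}(\lambda)-\lambda f_{\widehat{Tx}}(\lambda)=(I-B(\bar\lambda)^*\mathcal{C})\Gamma_+a\quad(\lambda\in\mathbb{D}_-).$$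
   Context: $H$ is an infinite-dimensional separable complex Hilbert space with inner product $(\cdot,\cdot)_H$; $T\in\mathbb{B}(H)$, $\|T\|\le1$, is completely non-unitary. $\mathbb{K}=\ker(I-T^*T)$. $\mathbb{H}=H\oplus_\perp H$ with $[(x_1,x_2),(y_1,y_2)]=i(x_1,y_1)_H-i(x_2,y_2)_H$; $S^{\perp_s}=\{a:[a,b]=0\ \forall b\in S\}$; $A_T=\{(x,Tx):x\in\mathbb{K}\}$; the graph $\{(x,Tx):x\in H\}$ of $T$ lies in $A_T^{\perp_s}$. $\mathbb{D}_\pm$ are two copies of the open unit disc; for $\lambda\in\mathbb{D}_\pm$, $\bar\lambda$ is regarded as a point of $\mathbb{D}_\mp$. $N_\lambda=\{(x,\lambda x)\}\cap A_T^{\perp_s}$ ($\lambda\in\mathbb{D}_+$), $N_\lambda=\{(\lambda x,x)\}\cap A_T^{\perp_s}$ ($\lambda\in\mathbb{D}_-$). Boundary quadruple: Hilbert spaces $H_\pm$, linear $\Gamma_\pm:A_T^{\perp_s}\to H_\pm$ with $(\Gamma_+,\Gamma_-)$ bounded, onto $H_+\oplus_\perp H_-$, kernel $A_T$, and $[a,b]=i(\Gamma_+a,\Gamma_+b)-i(\Gamma_-a,\Gamma_-b)$. Contractive Weyl function $B$: for $\lambda\in\mathbb{D}_+$, $\Gamma_+|_{N_\lambda}$ bijective onto $H_+$, $\Gamma_-a=B(\lambda)\Gamma_+a$ on $N_\lambda$; for $\lambda\in\mathbb{D}_-$, $\Gamma_-|_{N_\lambda}$ bijective onto $H_-$, $\Gamma_+a=B(\bar\lambda)^*\Gamma_-a$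 on $N_\lambda$. $\gamma_+(\lambda)z\in N_\lambda$ with $\Gamma_+\gamma_+(\lambda)z=z$ ($\lambda\in\mathbb{D}_+$); $\gamma_-(\lambda)z\in N_\lambda$ with $\Gamma_-\gamma_-(\lambda)z=z$ ($\lambda\in\mathbb{D}_-$); $\varphi_+=pr_1\circ\gamma_+$, $\varphi_-=pr_2\circ\gamma_-$. $E_\lambda=pr_1(N_\lambda)$ or $pr_2(N_\lambda)$ for $\lambda\in\mathbb{D}_+$ or $\mathbb{D}_-$; $F^\dagger_\lambda=E_{\bar\lambda}$, $F_\lambda$ its conjugate-linear dual, pairing $((\cdot,\cdot))$. For $x\in H$, $\hat x(\lambda)\in F_\lambda$ is $\omega\mapsto(x,\omega)_H$. For $\lambda\in\mathbb{D}_+$, $(\varphi_-^\dagger(\lambda)\omega,z)_{H_-}=((\omega,\varphi_-(\bar\lambda)z))$; for $\lambda\in\mathbb{D}_-$, $(\varphi_+^\dagger(\lambda)\omega,z)_{H_+}=((\omega,\varphi_+(\bar\lambda)z))$; $f_s(\lambda)=\varphi_-^\dagger(\lambda)s(\lambda)$ on $\mathbb{D}_+$ and $\varphi_+^\dagger(\lambda)s(\lambda)$ on $\mathbb{D}_-$. *)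

From HB Require Import structures.
From mathcomp Require Import all_boot all_order all_algebra.
From mathcomp Require Import complex reals.
Set Implicit Arguments. Unset Strict Implicit. Unset Printing Implicit Defensive.
Import Order.TTheory GRing.Theory Num.Theory.
Local Open Scope ring_scope.
Local Open Scope complex_scope.

Definition ip_cauchy (R : realType) (V : lmodType R[i]) (ip : V -> V -> R[i])
  (u : nat -> V) : Prop :=
  forall e : R[i], 0 < e -> exists N : nat, forall m n : nat,
    (N <= m)%N -> (N <= n)%N -> ip (u m - u n) (u m - u n) < e.

Definition ip_cvg (R : realType) (V : lmodType R[i]) (ip : V -> V -> R[i])
  (u : nat -> V) (l : V) : Prop :=
  forall e : R[i], 0 < e -> exists N : nat, forall n : nat,
    (N <= n)%N -> ip (u n - l) (u n - l) < e.

Record hilbertSpace (R : realType) := HilbertSpace {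
  hs_type :> lmodType R[i];
  hs_ip : hs_type -> hs_type -> R[i];
  hs_ipDl : forall (c : R[i]) (x y z : hs_type),
      hs_ip (c *: x + y) z = c * hs_ip x z + hs_ip y z;
  hs_ipC : forall x y : hs_type, hs_ip y x = (hs_ip x y)^*;
  hs_ip_ge0 : forall x : hs_type, 0 <= hs_ip x x;
  hs_ip_eq0 : forall x : hs_type, hs_ip x x = 0 -> x = 0;
  hs_complete : forall u : nat -> hs_type,
      ip_cauchy hs_ip u -> exists l, ip_cvg hs_ip u l
}.
Arguments hs_ip {R h}.

Section Defs.
Variable R : realType.
Implicit Types H : hilbertSpace R.

Definition separable H : Prop :=
  exists s : nat -> H, forall (x : H) (e : R[i]), 0 < e ->
    exists n : nat, hs_ip (x - s n) (x - s n) < e.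

Definition infinite_dim H : Prop :=
  forall s : seq H, exists x : H, forall c : 'I_(size s) -> R[i],
    x <> \sum_(k < size s) c k *: s`_k.

Definition lin (H1 H2 : hilbertSpace R) (A : H1 -> H2) : Prop :=
  forall (c : R[i]) (x y : H1), A (c *: x + y) = c *: A x + A y.

Definition bounded (H1 H2 : hilbertSpace R) (A : H1 -> H2) : Prop :=
  exists M : R[i], forall x : H1, hs_ip (A x) (A x) <= M * hs_ip x x.

Definition contraction H (T : H -> H) : Prop :=
  forall x : H, hs_ip (T x) (T x) <= hs_ip x x.

Definition is_adjoint (H1 H2 : hilbertSpace R) (A : H1 -> H2) (Astar : H2 -> H1) : Prop :=
  forall (x : H1) (y : H2), hs_ip (A x) y = hs_ip x (Astar y).

Definition closed_subspace H (M : H -> Prop) : Prop :=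
  [/\ M 0,
      forall (c : R[i]) (x y : H), M x -> M y -> M (c *: x + y)
    & forall (u : nat -> H) (l : H), (forall n, M (u n)) -> ip_cvg hs_ip u l -> M l].

Definition cnu H (T Tstar : H -> H) : Prop :=
  forall M : H -> Prop, closed_subspace M ->
    (forall x, M x -> M (T x) /\ M (Tstar x)) ->
    (forall x, M x -> Tstar (T x) = x /\ T (Tstar x) = x) ->
    forall x, M x -> x = 0.

Definition KT H (T Tstar : H -> H) : H -> Prop := fun x => x - Tstar (T x) = 0.

Definition AT H (T Tstar : H -> H) : H * H -> Prop :=
  fun a => KT T Tstar a.1 /\ a.2 = T a.1.

Definition symp H (a b : H * H) : R[i] :=
  'i * hs_ip a.1 b.1 - 'i * hs_ip a.2 b.2.

Definition s_orth H (S : H * H -> Prop) : H * H -> Prop :=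
  fun a => forall b, S b -> symp a b = 0.

Definition plinc H (c : R[i]) (a b : H * H) : H * H :=
  (c *: a.1 + b.1, c *: a.2 + b.2).

(* (Hp, Hm, Gp, Gm) is a boundary quadruple for D (= A^{perp_s}) with kernel A *)
Definition boundary_quadruple H (Hp Hm : hilbertSpace R) (D A : H * H -> Prop)
    (Gp : H * H -> Hp) (Gm : H * H -> Hm) : Prop :=
  [/\ forall c a b, D a -> D b ->
        Gp (plinc c a b) = c *: Gp a + Gp b /\ Gm (plinc c a b) = c *: Gm a + Gm b,
      exists M : R[i], forall a, D a ->
        hs_ip (Gp a) (Gp a) + hs_ip (Gm a) (Gm a)
          <= M * (hs_ip a.1 a.1 + hs_ip a.2 a.2),
      forall (u : Hp) (v : Hm), exists a, [/\ D a, Gp a = u & Gm a = v],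
      forall a, (D a /\ Gp a = 0 /\ Gm a = 0) <-> A a
    & forall a b, D a -> D b ->
        symp a b = 'i * hs_ip (Gp a) (Gp b) - 'i * hs_ip (Gm a) (Gm b)].

Definition disc (l : R[i]) : Prop := `|l| < 1.

Definition Nplus H (D : H * H -> Prop) (l : R[i]) : H * H -> Prop :=
  fun a => D a /\ a.2 = l *: a.1.
Definition Nminus H (D : H * H -> Prop) (l : R[i]) : H * H -> Prop :=
  fun a => D a /\ a.1 = l *: a.2.

(* B is the contractive Weyl function; Bstar l is the adjoint of B l *)
Definition is_weyl H (Hp Hm : hilbertSpace R) (D : H * H -> Prop)
    (Gp : H * H -> Hp) (Gm : H * H -> Hm)
    (B : R[i] -> Hp -> Hm) (Bstar : R[i] -> Hm -> Hp) : Prop :=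
  forall l, disc l ->
    [/\ forall z : Hp, exists! a, Nplus D l a /\ Gp a = z,
        forall a, Nplus D l a -> Gm a = B l (Gp a),
        forall z : Hm, exists! a, Nminus D l a /\ Gm a = z
      & forall a, Nminus D l a -> Gp a = Bstar (l^*) (Gm a)].

(* v = f_{s^}(l) for l in D_+ :  (v, z)_{H-} = ((s^(l), phi_-(conj l) z))
   = (s, pr2 (gamma_-(conj l) z))_H for all z in H- *)
Definition f_plus H (Hm : hilbertSpace R) (D : H * H -> Prop) (Gm : H * H -> Hm)
    (s : H) (l : R[i]) (v : Hm) : Prop :=
  forall a, Nminus D (l^*) a -> hs_ip v (Gm a) = hs_ip s a.2.

(* v = f_{s^}(l) for l in D_- :  (v, z)_{H+} = (s, pr1 (gamma_+(conj l) z))_H *)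
Definition f_minus H (Hp : hilbertSpace R) (D : H * H -> Prop) (Gp : H * H -> Hp)
    (s : H) (l : R[i]) (v : Hp) : Prop :=
  forall a, Nplus D (l^*) a -> hs_ip v (Gp a) = hs_ip s a.1.

End Defs.

(** For any [a0 = (x0, x1)] in [A_T^{perp_s}], testing [l f_x0(l) - f_x1(l)]
    against [Gm a] with [a] in [N_{conj l}] evaluates, up to the factor ['i],
    the indefinite form [[a0, a]].  The Green identity of the boundary
    quadruple rewrites that form through the boundary maps, and on [N_{conj l}]
    the Weyl function gives [Gp a = B(l)^* Gm a]; since [Gm] maps [N_{conj l}]
    onto [H_-], this yields [l f_x0(l) - f_x1(l) = B(l) Gp a0 - Gm a0].  On the
    graph of [T] one has [Gm = C Gp].  The case [l] in [D_-] is symmetric. *)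

From HB Require Import structures.
From mathcomp Require Import all_boot all_order all_algebra.
From mathcomp Require Import complex reals.
Set Implicit Arguments. Unset Strict Implicit. Unset Printing Implicit Defensive.
Import Order.TTheory GRing.Theory Num.Theory.
Local Open Scope ring_scope.
Local Open Scope complex_scope.

Section InnerProduct.
Variables (R : realType) (H : hilbertSpace R).

Lemma ip0l (z : H) : hs_ip (0 : H) z = 0.
Proof.
have := hs_ipDl 1 (0 : H) 0 z; rewrite scale1r addr0 mul1r => h.
by apply: (addIr (hs_ip (0 : H) z)); rewrite add0r -h.
Qed.

Lemma ipDl (x y z : H) : hs_ip (x + y) z = hs_ip x z + hs_ip y z.
Proof. by have := hs_ipDl 1 x y z; rewrite scale1r mul1r. Qed.

Lemma ipZl (c : R[i]) (x z : H) : hs_ip (c *: x) z = c * hs_ip x z.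
Proof. by have := hs_ipDl c x 0 z; rewrite addr0 ip0l addr0. Qed.

Lemma ipBl (x y z : H) : hs_ip (x - y) z = hs_ip x z - hs_ip y z.
Proof. by rewrite ipDl -scaleN1r ipZl mulN1r. Qed.

Lemma ipZr (c : R[i]) (x z : H) : hs_ip x (c *: z) = conjc c * hs_ip x z.
Proof. by rewrite hs_ipC ipZl rmorphM /= -hs_ipC. Qed.

Lemma ip_inj (u v : H) : (forall y : H, hs_ip u y = hs_ip v y) -> u = v.
Proof.
move=> huv; apply/eqP; rewrite -subr_eq0; apply/eqP/hs_ip_eq0.
by rewrite ipBl huv subrr.
Qed.

End InnerProduct.

Lemma adjoint_ipC (R : realType) (H1 H2 : hilbertSpace R)
    (A : H1 -> H2) (Astar : H2 -> H1) :
  is_adjoint A Astar -> forall x y, hs_ip y (A x) = hs_ip (Astar y) x.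
Proof. by move=> hA x y; rewrite hs_ipC hA -hs_ipC. Qed.

Lemma disc_conj {R : realType} {l : R[i]} : disc l -> disc l^*.
Proof. by rewrite /disc normcJ. Qed.

Lemma mulIi {R : realType} : injective (fun z : R[i] => 'i * z).
Proof. exact: (mulfI (neq0Ci _)). Qed.

Section DefectSpaces.
Variables (R : realType) (H : hilbertSpace R) (D : H * H -> Prop).

Lemma symp_Nminus (a0 a : H * H) (l : R[i]) : Nminus D l^* a ->
  symp a0 a = 'i * (l * hs_ip a0.1 a.2 - hs_ip a0.2 a.2).
Proof. by case=> _ a1; rewrite /symp a1 ipZr conjcK mulrBr mulrA. Qed.

Lemma symp_Nplus (a0 a : H * H) (l : R[i]) : Nplus D l^* a ->
  symp a0 a = 'i * (hs_ip a0.1 a.1 - l * hs_ip a0.2 a.1).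
Proof. by case=> _ a2; rewrite /symp a2 ipZr conjcK mulrBr mulrA. Qed.

End DefectSpaces.

Section WeylFunction.
Variables (R : realType) (H Hp Hm : hilbertSpace R) (D : H * H -> Prop).
Variables (Gp : H * H -> Hp) (Gm : H * H -> Hm).
Variables (B : R[i] -> Hp -> Hm) (Bstar : R[i] -> Hm -> Hp).
Hypothesis green : forall a b, D a -> D b ->
  symp a b = 'i * hs_ip (Gp a) (Gp b) - 'i * hs_ip (Gm a) (Gm b).
Hypothesis weyl : is_weyl D Gp Gm B Bstar.
Hypothesis B_adj : forall mu, disc mu -> is_adjoint (B mu) (Bstar mu).

Lemma weyl_f_plus (a0 : H * H) (l : R[i]) (v w : Hm) : D a0 -> disc l ->
  f_plus D Gm a0.1 l v -> f_plus D Gm a0.2 l w ->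
  l *: v - w = B l (Gp a0) - Gm a0.
Proof.
move=> Da0 dl hv hw; have [_ _ Nminus_onto GpNminus] := weyl (disc_conj dl).
apply: ip_inj => y; have [a [[Na <-] _]] := Nminus_onto y.
rewrite !ipBl ipZl hv // hw //; apply: mulIi => /=.
rewrite -(symp_Nminus a0 Na) green //; last by case: Na.
by rewrite (GpNminus _ Na) conjcK -(B_adj dl) mulrBr.
Qed.

Lemma weyl_f_minus (a0 : H * H) (l : R[i]) (v w : Hp) : D a0 -> disc l ->
  f_minus D Gp a0.1 l v -> f_minus D Gp a0.2 l w ->
  v - l *: w = Gp a0 - Bstar l^* (Gm a0).
Proof.
move=> Da0 dl hv hw; have [Nplus_onto GmNplus _ _] := weyl (disc_conj dl).
apply: ip_inj => y; have [a [[Na <-] _]] := Nplus_onto y.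
rewrite !ipBl ipZl hv // hw //; apply: mulIi => /=.
rewrite -(symp_Nplus a0 Na) green //; last by case: Na.
by rewrite (GmNplus _ Na) (adjoint_ipC (B_adj (disc_conj dl)) (Gp a)) mulrBr.
Qed.

End WeylFunction.

Theorem corollary4p16 (R : realType) (H Hp Hm : hilbertSpace R)
  (T Tstar : H -> H) (Gp : H * H -> Hp) (Gm : H * H -> Hm)
  (B : R[i] -> Hp -> Hm) (Bstar : R[i] -> Hm -> Hp) (C : Hp -> Hm) :
  separable H -> infinite_dim H ->
  lin T -> contraction T -> is_adjoint T Tstar -> cnu T Tstar ->
  boundary_quadruple (s_orth (AT T Tstar)) (AT T Tstar) Gp Gm ->
  (forall mu, disc mu ->
     [/\ lin (B mu), bounded (B mu) & is_adjoint (B mu) (Bstar mu)]) ->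
  is_weyl (s_orth (AT T Tstar)) Gp Gm B Bstar ->
  lin C -> bounded C ->
  (forall a : H * H, (exists x : H, a = (x, T x)) <->
     (s_orth (AT T Tstar) a /\ Gm a = C (Gp a))) ->
  forall x : H,
    (forall l, disc l -> forall v w : Hm,
       f_plus (s_orth (AT T Tstar)) Gm x l v ->
       f_plus (s_orth (AT T Tstar)) Gm (T x) l w ->
       l *: v - w = B l (Gp (x, T x)) - C (Gp (x, T x))) /\
    (forall l, disc l -> forall v w : Hp,
       f_minus (s_orth (AT T Tstar)) Gp x l v ->
       f_minus (s_orth (AT T Tstar)) Gp (T x) l w ->
       v - l *: w = Gp (x, T x) - Bstar (l^*) (C (Gp (x, T x)))).
Proof.
move=> _ _ _ _ _ _ [_ _ _ _ green] hB weyl _ _ graph x.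
have B_adj mu (dmu : disc mu) : is_adjoint (B mu) (Bstar mu) by case: (hB mu dmu).
have [Dx GmC] : s_orth (AT T Tstar) (x, T x) /\ Gm (x, T x) = C (Gp (x, T x)).
  by apply/graph; exists x.
split=> l dl v w hv hw; rewrite -GmC.
- exact: (weyl_f_plus green weyl B_adj Dx dl hv hw).
- exact: (weyl_f_minus green weyl B_adj Dx dl hv hw).
Qed.
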